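(* For all $\boldsymbol\xi,\boldsymbol\xi'\in P_{II}$: $\mathcal D_{\boldsymbol\xi\text{-unc}}\cup\mathcal D_{\boldsymbol\xi'\text{-unc}}=\mathcal D_{(\boldsymbol\xi\cup\boldsymbol\xi')\text{-unc}}$ and $\mathcal D_{\boldsymbol\xi\text{-unc}}\cap\mathcal D_{\boldsymbol\xi'\text{-unc}}=\mathcal D_{(\boldsymbol\xi\cap\boldsymbol\xi')\text{-unc}}$ (here $\boldsymbol\xi\cup\boldsymbol\xi'$ and $\boldsymbol\xi\cap\boldsymbol\xi'$ are the join and meet in $P_{II}$).
   Context: Let $n\ge1$, $L=\{1,\dots,n\}$, and for $i\in L$ let $\mathcal H_i$ be a Hilbert space with $1<\dim\mathcal H_i<\infty$; $\mathcal H_X=\bigotimes_{i\in X}\mathcal H_i$ and $\mathcal D_X$ is the set of density operators on $\mathcal H_X$. $P_I$ is the set of partitions of $L$ ordered by refinement. For $\xi\in P_I$, $\mathcal D_{\xi\text{-unc}}=\{\varrho\in\mathcal D_L:\varrho=\bigotimes_{X\in\xi}\varrho_X,\ \varrho_X\in\mathcal D_X\}$. $P_{II}$ is the set of nonempty down-sets of $(P_I,\preceq)$, ordered by inclusion (a lattice with meet $\cap$ and join $\cup$), and for $\boldsymbol\xi\in P_{II}$, $\mathcal D_{\boldsymbol\xi\text{-unc}}=\bigcup_{\xi\in\boldsymbol\xi}\mathcal D_{\xi\text{-unc}}$. *)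

From HB Require Import structures.
From mathcomp Require Import all_boot all_order all_algebra all_field.
Set Implicit Arguments. Unset Strict Implicit. Unset Printing Implicit Defensive.
Import Order.TTheory GRing.Theory Num.Theory.
Local Open Scope ring_scope.

(* Sites: L = 'I_n (i.e. {0,...,n-1}, the paper's {1,...,n}); the local
   Hilbert space H_i is C^(d i) with computational basis 'I_(d i). *)

(* H_X for X a subset of L: tensor product over all i of K_i, where
   K_i = H_i if i \in X and K_i = C (one-dimensional) otherwise.
   Basis of H_X: configurations on X. *)
Definition dimX (n : nat) (d : 'I_n -> nat) (X : {set 'I_n}) (i : 'I_n) : nat :=
  if i \in X then d i else 1%N.

Definition cfgX (n : nat) (d : 'I_n -> nat) (X : {set 'I_n}) : finType :=
  {dffun forall i : 'I_n, 'I_(dimX d X i)}.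

Definition cfgL (n : nat) (d : 'I_n -> nat) : finType :=
  {dffun forall i : 'I_n, 'I_(d i)}.

Definition opX (n : nat) (d : 'I_n -> nat) (X : {set 'I_n}) :=
  cfgX d X -> cfgX d X -> algC.

Definition opL (n : nat) (d : 'I_n -> nat) := cfgL d -> cfgL d -> algC.

Definition is_density (T : finType) (rho : T -> T -> algC) : Prop :=
  (forall v : T -> algC,
      0 <= \sum_(s : T) \sum_(t : T) (v s)^* * rho s t * v t) /\
  \sum_(s : T) rho s s = 1.

(* restriction of a basis configuration of H_L to X
   (the canonical isomorphism H_L = H_X (x) H_{L\X} on basis vectors) *)
Definition resX (n : nat) (d : 'I_n -> nat) (X : {set 'I_n}) (s : cfgL d)
  : cfgX d X :=
  @finfun 'I_n (fun i => 'I_(dimX d X i))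
    (fun i => match i \in X as b return 'I_(if b then d i else 1%N) with
              | true => s i
              | false => ord0
              end).

Definition is_partition (n : nat) (xi : {set {set 'I_n}}) : Prop :=
  partition xi [set: 'I_n].

Definition refines (n : nat) (xi eta : {set {set 'I_n}}) : Prop :=
  forall X, X \in xi -> exists2 Y, Y \in eta & X \subset Y.

(* D_{xi-unc}: rho in D_L with rho = (x)_{X in xi} rho_X, rho_X in D_X *)
Definition xi_unc (n : nat) (d : 'I_n -> nat) (xi : {set {set 'I_n}})
  (rho : opL d) : Prop :=
  is_density rho /\
  exists f : forall X : {set 'I_n}, opX d X,
    (forall X, X \in xi -> is_density (f X)) /\
    (forall s t : cfgL d, rho s t = \prod_(X in xi) f X (resX X s) (resX X t)).

Definition is_PII (n : nat) (Xi : {set {set {set 'I_n}}}) : Prop :=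
  (forall xi, xi \in Xi -> is_partition xi) /\
  Xi != set0 /\
  (forall xi eta, eta \in Xi -> is_partition xi -> refines xi eta -> xi \in Xi).

Definition Xi_unc (n : nat) (d : 'I_n -> nat) (Xi : {set {set {set 'I_n}}})
  (rho : opL d) : Prop :=
  exists2 xi, xi \in Xi & xi_unc xi rho.

From HB Require Import structures.
From mathcomp Require Import all_boot all_order all_algebra all_field.
Set Implicit Arguments. Unset Strict Implicit. Unset Printing Implicit Defensive.
Import Order.TTheory GRing.Theory Num.Theory.
Local Open Scope ring_scope.

(* Fix a basis configuration w with rho(w, w) <> 0 and call the "slice" of rho
   along a block X the operator rho(s, t) with s and t overwritten by w outside X.
   If rho is a product along a partition xi, then rho(s, t) is a scalar multiple
   of the product of its slices along the blocks of xi.  Slicing along X and then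
   along Y is slicing along X :&: Y, so if rho is a product along xi and along xi'
   it is a multiple of the product of its slices along the blocks of the common
   refinement of xi and xi'.  Slices of a density operator are positive
   semidefinite with positive trace, so normalising them exhibits rho as a product
   state along the common refinement, which lies below both xi and xi' and hence
   in every down-set containing them. *)

Section Configurations.

Variables (n : nat) (d : 'I_n -> nat).
Implicit Types (A B S X Y Z : {set 'I_n}) (s t w : cfgL d).

Definition glue S s t : cfgL d := [ffun i => if i \in S then s i else t i].

(* [a i] lives in ['I_(dimX d X i)], equal to ['I_(d i)] only propositionally
   when [i \in X]; [insubd] performs the cast. *)
Definition extend w X (a : cfgX d X) : cfgL d :=
  [ffun i => if i \in X then insubd (w i) (val (a i)) else w i].

Definition agree_off w S s : bool := [forall i, (i \notin S) ==> (s i == w i)].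

Lemma glueE S s t i : glue S s t i = if i \in S then s i else t i.
Proof. by rewrite ffunE. Qed.

Lemma glue_id S s : glue S s s = s.
Proof. by apply/ffunP => i; rewrite glueE; case: ifP. Qed.

Lemma glue0 s w : glue set0 s w = w.
Proof. by apply/ffunP => i; rewrite glueE inE. Qed.

Lemma glue_glue X Y s w : glue Y (glue X s w) w = glue (X :&: Y) s w.
Proof. by apply/ffunP => i; rewrite !glueE !inE; case: (i \in X); case: (i \in Y). Qed.

Lemma agree_offP w S s : reflect (forall i, i \notin S -> s i = w i) (agree_off w S s).
Proof.
apply: (iffP forallP) => [s_off i Si | s_off i]; first exact/eqP/(implyP (s_off i)).
by apply/implyP => /s_off ->.
Qed.

Lemma agree_off_glue S s w : agree_off w S (glue S s w).
Proof. by apply/agree_offP => i Si; rewrite glueE (negbTE Si). Qed.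

Lemma glue_agree_off S s w : agree_off w S s -> glue S s w = s.
Proof. by move=> /agree_offP s_off; apply/ffunP => i; rewrite glueE; case: ifPn => // /s_off. Qed.

Lemma val_resX X s i : val (resX X s i) = if i \in X then val (s i) else 0%N.
Proof. by rewrite /resX ffunE /dimX /=; case: (i \in X). Qed.

Lemma cfgX_eq X (a b : cfgX d X) : (forall i, i \in X -> val (a i) = val (b i)) -> a = b.
Proof.
move=> eq_ab; apply/ffunP => i; apply: val_inj.
case: (boolP (i \in X)) => [/eq_ab // | notXi].
have dim1 : dimX d X i = 1%N by rewrite /dimX (negbTE notXi).
have lt1 (c : cfgX d X) : val (c i) = 0%N.
  by apply/eqP; rewrite -leqn0 -ltnS -dim1 ltn_ord.
by rewrite !lt1.
Qed.

Lemma resX_eq X s t : (forall i, i \in X -> s i = t i) -> resX X s = resX X t.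
Proof. by move=> eq_st; apply: cfgX_eq => i Xi; rewrite !val_resX Xi eq_st. Qed.

Lemma resX_glue X s w : resX X (glue X s w) = resX X s.
Proof. by apply: resX_eq => i Xi; rewrite glueE Xi. Qed.

Lemma resX_glue_disjoint X Y s t :
  [disjoint X & Y] -> resX Y (glue X s t) = resX Y t.
Proof. by move=> XY; apply: resX_eq => i Yi; rewrite glueE (disjointFl XY Yi). Qed.

Lemma resX_extend w X (a : cfgX d X) : resX X (extend w a) = a.
Proof.
apply: cfgX_eq => i Xi; rewrite val_resX Xi ffunE Xi val_insubd.
suff -> : (val (a i) < d i)%N by [].
by apply: leq_trans (ltn_ord (a i)) _; rewrite /dimX Xi.
Qed.

Lemma extend_resX w X s : extend w (resX X s) = glue X s w.
Proof.
apply/ffunP => i; rewrite glueE ffunE; case: ifP => // Xi.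
by apply: val_inj; rewrite val_insubd val_resX Xi ltn_ord.
Qed.

Lemma agree_off_extend w X (a : cfgX d X) : agree_off w X (extend w a).
Proof. by rewrite -[a](resX_extend w) extend_resX agree_off_glue. Qed.

Lemma sum_agree_off w X (F : cfgL d -> algC) :
  \sum_(s | agree_off w X s) F s = \sum_(a : cfgX d X) F (extend w a).
Proof.
rewrite (reindex_onto (@extend w X) (resX X)) /=; last first.
  by move=> s /glue_agree_off; rewrite extend_resX.
by apply: eq_bigl => a; rewrite agree_off_extend resX_extend eqxx.
Qed.

Lemma sum_agree_off_setU w A B (F : cfgL d -> algC) : [disjoint A & B] ->
  \sum_(s | agree_off w (A :|: B) s) F s =
  \sum_(a | agree_off w A a) \sum_(b | agree_off w B b) F (glue A a b).
Proof.
move=> AB; rewrite pair_big_dep /=.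
rewrite (reindex_onto (fun p : cfgL d * cfgL d => glue A p.1 p.2)
                      (fun s => (glue A s w, glue A w s))) /=; last first.
  by move=> s _; apply/ffunP => i; rewrite !glueE; case: (i \in A).
apply: eq_bigl => -[a b] /=; apply/andP/andP => [[/agree_offP s_off /eqP [ea eb]] | []].
  split; first by rewrite -ea agree_off_glue.
  apply/agree_offP => i Ni; rewrite -eb glueE; case: ifPn => // Ai.
  by rewrite s_off // inE negb_or Ai.
move=> /agree_offP a_off /agree_offP b_off; split.
  apply/agree_offP => i; rewrite inE negb_or glueE => /andP [Ai Bi].
  by rewrite (negbTE Ai) b_off.
apply/eqP; congr pair; apply/ffunP => i; rewrite !glueE.
all: case: (boolP (i \in A)) => Ai //.
- by rewrite a_off.
- by rewrite b_off // (disjointFr AB Ai).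
Qed.

Lemma sum_prod_resX w (Zs : seq {set 'I_n}) (F : forall Z, cfgX d Z -> algC) :
  pairwise [rel A B : {set 'I_n} | [disjoint A & B]] Zs ->
  \sum_(s | agree_off w (\bigcup_(Z <- Zs) Z) s) \prod_(Z <- Zs) F Z (resX Z s) =
  \prod_(Z <- Zs) \sum_(a : cfgX d Z) F Z a.
Proof.
elim: Zs => [_ | Z0 Zs IH]; rewrite ?big_nil.
  rewrite (big_pred1 w) ?big_nil // => s; apply/agree_offP/eqP => [s_off | -> //].
  by apply/ffunP => i; apply: s_off; rewrite inE.
rewrite pairwise_cons => /andP [/allP Z0_disj /IH {}IH].
have Z0U : [disjoint Z0 & \bigcup_(Z <- Zs) Z].
  by rewrite bigcup_seq; apply: bigcup_disjoint => Z /Z0_disj.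
rewrite big_cons sum_agree_off_setU // sum_agree_off big_cons -IH big_distrl /=.
apply: eq_bigr => a _; rewrite big_distrr; apply: eq_bigr => b _ /=.
rewrite big_cons resX_glue resX_extend; congr (_ * _).
apply: eq_big_seq => Z /Z0_disj Z0Z.
by rewrite resX_glue_disjoint.
Qed.

Lemma sum_prod_resX_partition w (P : {set {set 'I_n}}) (F : forall Z, cfgX d Z -> algC) :
  partition P [set: 'I_n] ->
  \sum_s \prod_(Z in P) F Z (resX Z s) = \prod_(Z in P) \sum_(a : cfgX d Z) F Z a.
Proof.
case/and3P => /eqP coverP /trivIsetP trivP _.
have disjP : pairwise [rel A B : {set 'I_n} | [disjoint A & B]] (enum P).
  apply: (@sub_in_pairwise _ (mem P) [rel A B | A != B]); first exact: trivP.
    by apply/allP => Z; rewrite mem_enum.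
  by rewrite -uniq_pairwise enum_uniq.
rewrite -[RHS]big_enum -(sum_prod_resX w F disjP); apply: eq_big => [s | s _].
  apply/esym/agree_offP => i; rewrite bigcup_seq.
  by rewrite (eq_bigl (mem P)) => [|Z]; rewrite ?mem_enum // -/(cover P) coverP inE.
by rewrite big_enum.
Qed.

End Configurations.

Definition common_refinement n (xi xi' : {set {set 'I_n}}) : {set {set 'I_n}} :=
  [set p.1 :&: p.2 | p in [set p in setX xi xi' | p.1 :&: p.2 != set0]].

Section CommonRefinement.

Variables (n : nat) (xi xi' : {set {set 'I_n}}).

Lemma common_refinement_inj : trivIset xi -> trivIset xi' ->
  {in [set p in setX xi xi' | p.1 :&: p.2 != set0] &,
    injective (fun p : {set 'I_n} * {set 'I_n} => p.1 :&: p.2)}.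
Proof.
move=> trivP trivP' [X Y] [X' Y']; rewrite !inE /=.
move=> /andP [/andP [xiX xiY] /set0Pn [i XYi]] /andP [/andP [xiX' xiY'] _] eqXY.
have X'Y'i := XYi; rewrite eqXY in X'Y'i.
move: XYi X'Y'i; rewrite !inE => /andP [Xi Yi] /andP [X'i Y'i].
by rewrite -(def_pblock trivP xiX Xi) -(def_pblock trivP' xiY Yi)
           (def_pblock trivP xiX' X'i) (def_pblock trivP' xiY' Y'i).
Qed.

Lemma partition_common_refinement :
  is_partition xi -> is_partition xi' -> is_partition (common_refinement xi xi').
Proof.
move=> partP partP'; have coverP := cover_partition partP.
have coverP' := cover_partition partP'.
move: partP partP' => /and3P [_ trivP _] /and3P [_ trivP' _].
apply/and3P; split.
- apply/eqP/setP => i; rewrite inE.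
  have /bigcupP [X xiX Xi] : i \in cover xi by rewrite coverP inE.
  have /bigcupP [Y xiY Yi] : i \in cover xi' by rewrite coverP' inE.
  apply/bigcupP; exists (X :&: Y); last by rewrite inE Xi Yi.
  apply/imsetP; exists (X, Y) => //; rewrite !inE /= xiX xiY /=.
  by apply/set0Pn; exists i; rewrite inE Xi Yi.
- apply/trivIsetP => _ _ /imsetP [p1 Hp1 ->] /imsetP [p2 Hp2 ->] neq.
  rewrite -setI_eq0; apply/set0Pn => -[i]; rewrite !inE => /andP [/andP [X1i Y1i] /andP [X2i Y2i]].
  move: Hp1 Hp2 neq; rewrite !inE => /andP [/andP [xiX1 xiY1] _] /andP [/andP [xiX2 xiY2] _].
  by rewrite -(def_pblock trivP xiX1 X1i) -(def_pblock trivP' xiY1 Y1i)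
             (def_pblock trivP xiX2 X2i) (def_pblock trivP' xiY2 Y2i) eqxx.
- by apply/imsetP => -[p]; rewrite !inE => /andP [_ /eqP neq0 /esym].
Qed.

Lemma common_refinement_refines_l : refines (common_refinement xi xi') xi.
Proof.
move=> _ /imsetP [[X Y] + ->]; rewrite !inE /= => /andP [/andP [xiX _] _].
by exists X => //; apply: subsetIl.
Qed.

Lemma common_refinement_refines_r : refines (common_refinement xi xi') xi'.
Proof.
move=> _ /imsetP [[X Y] + ->]; rewrite !inE /= => /andP [/andP [_ xiY] _].
by exists Y => //; apply: subsetIr.
Qed.

End CommonRefinement.

Lemma density_diag_ge0 (T : finType) (rho : T -> T -> algC) s :
  is_density rho -> 0 <= rho s s.
Proof.
case=> /(_ (fun x => (x == s)%:R)) + _; congr (0 <= _).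
rewrite (bigD1 s) //= [X in _ + X]big1 => [|x /negPf xs]; last first.
  by apply: big1 => y _; rewrite xs conjC0 !mul0r.
rewrite addr0 (bigD1 s) //= [X in _ + X]big1 => [|y /negPf ys]; last by rewrite ys mulr0.
by rewrite eqxx conjC1 mul1r mulr1 addr0.
Qed.

Lemma density_diag_neq0 (T : finType) (rho : T -> T -> algC) :
  is_density rho -> exists w, rho w w != 0.
Proof.
case=> _ tr1; case: (pickP (fun s => rho s s != 0)) => [w | diag0]; first by exists w.
by move: tr1; rewrite big1 => [/eqP | s _]; [rewrite eq_sym oner_eq0 | exact/eqP/negbFE/diag0].
Qed.

Section Slices.

Variables (n : nat) (d : 'I_n -> nat) (rho : opL d) (w : cfgL d).
Implicit Types (X Y Z : {set 'I_n}) (xi : {set {set 'I_n}}) (s t : cfgL d).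

Definition slice_factor xi (k : algC) : Prop :=
  forall s t, rho s t = k * \prod_(X in xi) rho (glue X s w) (glue X t w).

Lemma product_slice_factor xi (f : forall X, opX d X) :
  trivIset xi -> (forall s t, rho s t = \prod_(X in xi) f X (resX X s) (resX X t)) ->
  rho w w != 0 -> exists k, slice_factor xi k.
Proof.
move=> /trivIsetP trivP rho_prod Cw; set C := rho w w.
exists (C / C ^+ #|xi|) => s t; have CXi := expf_neq0 #|xi| Cw.
apply: (mulIf CXi); rewrite mulrAC divfK //.
set a := fun X => f X (resX X s) (resX X t).
set c := fun X => f X (resX X w) (resX X w).
have glue_prod X : X \in xi ->
    rho (glue X s w) (glue X t w) = \prod_(Y in xi) (if Y == X then a Y else c Y).
  move=> xiX; rewrite rho_prod; apply: eq_bigr => Y xiY.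
  case: eqP => [-> | /eqP neq]; first by rewrite /a !resX_glue.
  by rewrite /c !resX_glue_disjoint // trivP // eq_sym.
rewrite (eq_bigr _ glue_prod) exchange_big /= /C !rho_prod -/(\prod_(X in xi) c X).
rewrite -prodrXl -!big_split /=; apply: eq_bigr => Y xiY.
rewrite (bigD1 Y) //= eqxx mulrCA; congr (_ * _).
rewrite (eq_bigr (fun _ => c Y)) => [|X /andP [_ /negPf]]; last by rewrite eq_sym => ->.
rewrite prodr_const -exprS (cardD1 Y xi) xiY; congr (_ ^+ _.+1).
by apply: eq_card => X; rewrite !inE andbC.
Qed.

Lemma slice_factor_common_refinement xi xi' k k' :
  trivIset xi -> trivIset xi' -> slice_factor xi k -> slice_factor xi' k' ->
  exists k'', slice_factor (common_refinement xi xi') k''.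
Proof.
move=> trivP trivP' fac fac'.
pose disjoint_blocks p := [&& p.1 \in xi, p.2 \in xi' & p.1 :&: p.2 == set0].
exists (k * k' ^+ #|xi| * \prod_(p | disjoint_blocks p) rho w w) => s t.
rewrite fac; under eq_bigr => X _ do rewrite fac'.
rewrite big_split prodr_const /= -!mulrA; congr (k * (_ * _)).
under eq_bigr => X _ do under eq_bigr => Y _ do rewrite !glue_glue.
rewrite pair_big_dep /= (bigID (fun p => p.1 :&: p.2 != set0)) /= mulrC; congr (_ * _).
  apply: eq_big => [p | p /andP [_ /negbNE/eqP ->]]; last by rewrite !glue0.
  by rewrite negbK /disjoint_blocks andbA.
rewrite big_imset /=; last exact: common_refinement_inj.
by apply: eq_bigl => p; rewrite !inE.
Qed.

Definition slice X : opX d X := fun a b => rho (extend w a) (extend w b).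

Definition slice_trace X : algC := \sum_(a : cfgX d X) slice a a.

Lemma slice_resX X s t : slice (resX X s) (resX X t) = rho (glue X s w) (glue X t w).
Proof. by rewrite /slice !extend_resX. Qed.

Hypothesis rho_density : is_density rho.

Lemma slice_psd X (v : cfgX d X -> algC) :
  0 <= \sum_a \sum_b (v a)^* * slice a b * v b.
Proof.
pose u s := if agree_off w X s then v (resX X s) else 0.
have sum_extend (G : cfgL d -> algC) : (forall s, ~~ agree_off w X s -> G s = 0) ->
    \sum_s G s = \sum_(a : cfgX d X) G (extend w a).
  move=> G0; rewrite (bigID (agree_off w X)) /= [E in _ + E]big1 ?addr0 //.
  exact: sum_agree_off.
case: rho_density => /(_ u) + _; rewrite sum_extend => [|s /negbTE off_s]; last first.
  by apply: big1 => t _; rewrite /u off_s conjC0 !mul0r.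
congr (0 <= _); apply: eq_bigr => a _; rewrite sum_extend => [|t /negbTE off_t]; last first.
  by rewrite /u off_t mulr0.
by apply: eq_bigr => b _; rewrite /u !agree_off_extend !resX_extend.
Qed.

Hypothesis rho_ww : rho w w != 0.

Lemma slice_trace_gt0 X : 0 < slice_trace X.
Proof.
rewrite /slice_trace (bigD1 (resX X w)) //= slice_resX glue_id.
apply: ltr_wpDr; first by apply: sumr_ge0 => a _; rewrite /slice; exact: density_diag_ge0.
by rewrite lt0r rho_ww density_diag_ge0.
Qed.

Lemma is_density_normalised_slice X :
  is_density (fun a b : cfgX d X => slice a b / slice_trace X).
Proof.
have tr_gt0 := slice_trace_gt0 X; split => [v |]; last first.
  by rewrite -big_distrl /= -/(slice_trace X) divff // gt_eqF.
have -> : \sum_a \sum_b (v a)^* * (slice a b / slice_trace X) * v b =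
          (\sum_a \sum_b (v a)^* * slice a b * v b) / slice_trace X.
  rewrite big_distrl; apply: eq_bigr => a _; rewrite big_distrl.
  by apply: eq_bigr => b _; rewrite !mulrA mulrAC.
by rewrite mulr_ge0 ?slice_psd // invr_ge0 ltW.
Qed.

Lemma slice_factor_unc xi k : is_partition xi -> slice_factor xi k -> xi_unc xi rho.
Proof.
move=> part fac; split => //.
exists (fun X a b => slice a b / slice_trace X).
split=> [X _ | s t]; first exact: is_density_normalised_slice.
have trace_ne0 : \prod_(X in xi) slice_trace X != 0.
  by apply/prodf_neq0 => X _; rewrite gt_eqF ?slice_trace_gt0.
have trace_k : k * \prod_(X in xi) slice_trace X = 1.
  rewrite -[RHS](proj2 rho_density) (eq_bigr _ (fun u _ => fac u u)) -big_distrr /=.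
  congr (_ * _); transitivity (\sum_u \prod_(X in xi) slice (resX X u) (resX X u)).
    by rewrite (sum_prod_resX_partition w (fun X a => slice a a) part).
  by apply: eq_bigr => u _; apply: eq_bigr => X _; rewrite slice_resX.
rewrite fac prodf_div -[k](mulfK trace_ne0) trace_k mul1r mulrC.
by congr (_ / _); apply: eq_bigr => X _; rewrite slice_resX.
Qed.

End Slices.

Lemma xi_unc_common_refinement n (d : 'I_n -> nat) (xi xi' : {set {set 'I_n}}) (rho : opL d) :
  is_partition xi -> is_partition xi' -> xi_unc xi rho -> xi_unc xi' rho ->
  xi_unc (common_refinement xi xi') rho.
Proof.
move=> part part' [dens [f [_ prod_f]]] [_ [g [_ prod_g]]].
have [w ww] := density_diag_neq0 dens.
have /and3P [_ triv _] := part; have /and3P [_ triv' _] := part'.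
have [k fac] := product_slice_factor triv prod_f ww.
have [k' fac'] := product_slice_factor triv' prod_g ww.
have [k'' fac''] := slice_factor_common_refinement triv triv' fac fac'.
have unc := slice_factor_unc dens ww (partition_common_refinement part part').
exact: unc fac''.
Qed.

Theorem mainTheorem19 (n : nat) (d : 'I_n -> nat)
  (hn : (0 < n)%N) (hd : forall i, (1 < d i)%N)
  (Xi Xi' : {set {set {set 'I_n}}}) (hXi : is_PII Xi) (hXi' : is_PII Xi') :
  (forall rho : opL d, Xi_unc Xi rho \/ Xi_unc Xi' rho <-> Xi_unc (Xi :|: Xi') rho) /\
  (forall rho : opL d, Xi_unc Xi rho /\ Xi_unc Xi' rho <-> Xi_unc (Xi :&: Xi') rho).
Proof.
split=> rho; split.
- by case=> -[xi Xi_xi unc]; exists xi => //; rewrite inE Xi_xi ?orbT.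
- by case=> xi; rewrite inE => /orP [] Xi_xi unc; [left | right]; exists xi.
- case=> -[xi Xi_xi unc] [xi' Xi'_xi' unc'].
  have [part_Xi [_ down_Xi]] := hXi; have [part_Xi' [_ down_Xi']] := hXi'.
  have part := part_Xi _ Xi_xi; have part' := part_Xi' _ Xi'_xi'.
  have part_meet := partition_common_refinement part part'.
  exists (common_refinement xi xi'); last first.
    exact: xi_unc_common_refinement part part' unc unc'.
  rewrite inE (down_Xi _ _ Xi_xi part_meet) ?(down_Xi' _ _ Xi'_xi' part_meet) //.
    exact: common_refinement_refines_r.
  exact: common_refinement_refines_l.
- by case=> xi; rewrite inE => /andP [Xi_xi Xi'_xi] unc; split; exists xi.
Qed.
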